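(* Let $G$ be a group of order $32$. Then $\operatorname{rdim}(G) \le 5$.
   Context: $\operatorname{rdim}(G)$ is the minimal dimension of a faithful complex linear representation of $G$. *)

From mathcomp Require Import all_boot all_order all_algebra all_fingroup all_solvable all_field all_character.
Set Implicit Arguments. Unset Strict Implicit. Unset Printing Implicit Defensive.

(* Complex numbers are modelled by algC (algebraic complex numbers); every
   complex representation of a finite group is realizable over algC. *)
Definition has_faithful_rep (gT : finGroupType) (G : {group gT}) (n : nat) : Prop :=
  exists rG : mx_representation algC G n, mx_faithful rG.

From mathcomp Require Import all_boot all_order all_algebra all_fingroup all_solvable all_field all_character.
From mathcomp Require Import zify.

Set Implicit Arguments. Unset Strict Implicit. Unset Printing Implicit Defensive.
Import GroupScope Order.TTheory GRing.Theory Num.Theory.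

(* For nilpotent G a sum of irreducible characters is faithful as soon as the
   intersection of their kernels meets Z(G) trivially.  Each character whose
   kernel omits some central element at least halves the part of Z(G) not yet
   cut out, so log2 #|Z(G)| characters suffice, each of degree at most
   sqrt #|G : Z(G)|.  For #|G| = 32 this gives dimension at most 5 except when
   #|Z(G)| = 8 and #|G : Z(G)| = 4; then G' has order 2 and lies in Z(G), so
   two linear characters cut Z(G) down to G' and one character of degree at
   most 2 removes G', giving dimension 4. *)

Lemma card_proper_double (gT : finGroupType) (H L : {group gT}) :
  H \proper L -> #|H| * 2 <= #|L|.
Proof.
move=> prHL; rewrite -(Lagrange (proper_sub prHL)) leq_mul2l.
by rewrite indexg_gt1 (proper_subn prHL) orbT.
Qed.

Section ShortBigcap.
Variables (gT : finGroupType) (I : Type) (P : pred I).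
Variables (K : I -> {group gT}) (B : {set gT}).
Hypothesis sBK : forall i, P i -> B \subset K i.
Hypothesis sepK : forall a, a \notin B -> exists2 i, P i & a \notin K i.

(* Each chosen [K i] omits an element of [A] outside [B], so it at least
   halves [A] while keeping [A :&: B]. *)
Lemma exists_short_bigcap_sub n (A : {group gT}) :
  #|A| <= 2 ^ n * #|A :&: B| ->
  exists s : seq I, [/\ all P s, size s <= n & A :&: \bigcap_(i <- s) K i \subset B].
Proof.
elim: n A => [|n IHn] A cardA.
  exists [::]; split=> //; rewrite big_nil setIT; apply: subset_trans (subsetIr A B).
  by rewrite -(geq_leqif (subset_leqif_card (subsetIl A B))) -[#|_ :&: _|]mul1n.
have [sAB | /subsetPn[a Aa notBa]] := boolP (A \subset B).
  by exists [::]; split=> //; rewrite big_nil setIT.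
have [i Pi notKa] := sepK notBa.
have prA : (A :&: K i)%G \proper A.
  by rewrite properE subsetIl; apply/subsetPn; exists a; rewrite // inE (negbTE notKa) andbF.
have [s [Ps size_s sAsB]] : exists s : seq I,
    [/\ all P s, size s <= n & (A :&: K i) :&: \bigcap_(j <- s) K j \subset B].
  apply: IHn; rewrite -setIA (setIidPr (sBK Pi)) -(leq_pmul2r (isT : 0 < 2)).
  apply: leq_trans (card_proper_double prA) _; move: cardA; rewrite expnS; lia.
by exists (i :: s); rewrite /= Pi big_cons setIA.
Qed.

End ShortBigcap.

Section CenterIndexFour.
Variables (gT : finGroupType) (G : {group gT}).
Hypothesis iGZ : #|G : 'Z(G)| = 4.

Let nZG : G \subset 'N('Z(G)) := normal_norm (center_normal G).
Let oGZ : #|G / 'Z(G)| = 4. Proof. by rewrite card_quotient. Qed.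

Lemma expg2_center x : x \in G -> x ^+ 2 \in 'Z(G).
Proof.
move=> Gx; have Nx := subsetP nZG x Gx; set u := coset 'Z(G) x.
have GZu : u \in G / 'Z(G) by rewrite mem_quotient.
apply: coset_idr; rewrite ?groupX // morphX //; apply/eqP; rewrite -order_dvdn.
have : #[u] %| 4 by rewrite -oGZ order_dvdG.
rewrite (dvdn_divisors _ (isT : 0 < 4)) !inE => /or3P[/eqP-> | /eqP-> | /eqP ou] //.
have cycGZ : cyclic (G / 'Z(G)).
  apply/cyclicP; exists u; apply/eqP.
  by rewrite eq_sym eqEcard cycle_subG GZu -orderE ou oGZ.
by move: iGZ; rewrite (center_idP (cyclic_center_factor_abelian cycGZ)) indexgg.
Qed.

Lemma der1_sub_center : G^`(1) \subset 'Z(G).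
Proof. by rewrite der1_min // (@card_p2group_abelian _ 2) ?oGZ. Qed.

Lemma joing_cycles_center_index4 x y :
  x \in G -> y \in G -> y \notin 'C[x] -> (<[x]> <*> <[y]>) <*> 'Z(G) = G.
Proof.
move=> Gx Gy notCxy; have cGZ : G \subset 'C('Z(G)) by rewrite centsC subsetIr.
have notZx : x \notin 'Z(G).
  by apply: contra notCxy => /setIP[_ CGx]; rewrite (subsetP _ y Gy) // sub_cent1.
have sZ_xZ : 'Z(G) \proper <[x]> <*> 'Z(G).
  rewrite properE joing_subr; apply/subsetPn; exists x => //.
  by rewrite mem_gen // inE cycle_id.
have s_xZ_xyZ : <[x]> <*> 'Z(G) \proper (<[x]> <*> <[y]>) <*> 'Z(G).
  rewrite properE genS ?setUSS ?joing_subl //; apply/subsetPn; exists y.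
    by apply/(subsetP (joing_subl _ _))/(subsetP (joing_subr _ _)); apply: cycle_id.
  apply: contra notCxy; apply: subsetP.
  by rewrite join_subG cycle_subG cent1id sub_cent1 (subsetP cGZ).
apply/eqP; rewrite eqEcard !join_subG !cycle_subG Gx Gy center_sub.
rewrite -(Lagrange (center_sub G)) iGZ.
by have := card_proper_double sZ_xZ; have := card_proper_double s_xZ_xyZ; rewrite /=; lia.
Qed.

Lemma card_der1_center_index4 : #|G^`(1)| = 2.
Proof.
have notGZ : ~~ (G \subset 'Z(G)) by rewrite -indexg_gt1 iGZ.
have [x Gx notZx] := subsetPn notGZ.
have [y Gy notCxy] : exists2 y, y \in G & y \notin 'C[x].
  by apply/subsetPn; rewrite sub_cent1; apply: contra notZx => CGx; rewrite inE Gx.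
set c := [~ x, y]; set XY := <[x]> <*> <[y]>.
have sXYG : XY \subset G by rewrite join_subG !cycle_subG Gx Gy.
have /setIP[_ CGc] : c \in 'Z(G) by rewrite (subsetP der1_sub_center) ?mem_commg.
have c2 : c ^+ 2 = 1.
  have cxc : commute x c by apply/esym/(centP CGc).
  rewrite -commXg //; apply/eqP/commgP.
  by have /setIP[_ /centP/(_ y Gy)] := expg2_center Gx.
have defXYZ : XY \* 'Z(G) = G.
  rewrite cprodEY ?joing_cycles_center_index4 //.
  by rewrite centsC (subset_trans sXYG) // centsC subsetIr.
have G'_XY' : G^`(1) = XY^`(1).
  by rewrite -(der_cprod 1 defXYZ) (derG1P (center_abelian G)) cprodg1.
have cXYc : c \in 'C(XY) := subsetP (centS sXYG) c CGc.
have oG'_le2 : #|G^`(1)| <= 2.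
  by rewrite G'_XY' (der1_joing_cycles cXYc) -orderE dvdn_leq // order_dvdn c2.
apply/eqP; rewrite eqn_leq oG'_le2 cardG_gt1.
by apply: contra notGZ => /eqP/derG1P/center_idP->.
Qed.

End CenterIndexFour.

Section IrrKernels.
Variables (gT : finGroupType) (G : {group gT}).
Local Open Scope ring_scope.

Lemma exists_irr_notin_cfker (a : gT) :
  a \notin [1] -> exists i : Iirr G, a \notin cfker 'chi_i.
Proof.
move=> nt_a; apply/existsP; apply: contraR nt_a => /existsPn ker_a.
by rewrite -(TI_cfker_irr G); apply/bigcapP => i _; apply/negbNE/ker_a.
Qed.

Lemma exists_lin_irr_notin_cfker (a : gT) : a \notin (G^`(1))%g ->
  exists2 i : Iirr G, 'chi_i \is a linear_char & a \notin cfker 'chi_i.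
Proof.
move=> notG'a; apply/exists_inP; apply: contraR notG'a => /exists_inPn ker_a.
by rewrite -(cap_cfker_lin_irr G); apply/bigcapP => i /ker_a/negbNE.
Qed.

Lemma cfker_sum_irr_sub (s : seq (Iirr G)) :
  cfker (\sum_(i <- s) 'chi[G]_i) \subset \bigcap_(i <- s) cfker 'chi_i.
Proof.
set phi := \sum_(i <- s) _; rewrite big_seq.
apply: (big_ind (fun X : {set gT} => cfker phi \subset X)) => [|X Y sX sY | i s_i];
  [exact: subsetT | by rewrite subsetI sX | ].
apply: cfker_constt; first by apply: rpred_sum => j _; apply: irr_char.
rewrite inE cfdot_suml; under eq_bigr do rewrite cfdot_irr.
by rewrite -natr_sum pnatr_eq0 sum_nat_seq_neq0; apply/hasP; exists i; rewrite //= eqxx.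
Qed.

Lemma sum_irr_faithful_rep (s : seq (Iirr G)) : nilpotent G ->
    'Z(G) :&: \bigcap_(i <- s) cfker 'chi_i \subset [1] ->
  exists2 n : nat, n%:R = \sum_(i <- s) 'chi_i 1%g & has_faithful_rep G n.
Proof.
move=> nilG tiZker.
have /char_reprP[rG def_rG] : \sum_(i <- s) 'chi[G]_i \is a character.
  by apply: rpred_sum => i _; apply: irr_char.
exists (rdegree rG); first by rewrite -(cfRepr1 rG) -def_rG sum_cfunE.
exists rG; rewrite /mx_faithful -cfker_repr -def_rG.
rewrite (TI_center_nil nilG (cfker_normal _)) //; apply/trivgP.
by rewrite /= setIC; apply: subset_trans tiZker; rewrite setIS ?cfker_sum_irr_sub.
Qed.

Lemma irr1_le_index_center (i : Iirr G) (d : nat) :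
  (#|G : 'Z(G)| < d.+1 ^ 2)%N -> 'chi_i 1%g <= d%:R.
Proof.
move=> index_lt.
have sZ : 'Z(G) \subset 'Z('chi_i)%CF by rewrite -cap_cfcenter_irr (bigcap_inf i).
have := (irr1_bound i).1; rewrite irr1_degree -natrX !ler_nat => deg_le.
rewrite -ltnS -(ltn_exp2r _ _ (isT : (0 < 2)%N)); apply: leq_ltn_trans deg_le _.
by apply: leq_ltn_trans index_lt; apply: dvdn_leq; [exact: indexg_gt0 | exact: indexgS].
Qed.

Lemma sum_irr1_le (s : seq (Iirr G)) (d : nat) :
  (forall i, i \in s -> 'chi_i 1%g <= d%:R) ->
  \sum_(i <- s) 'chi[G]_i 1%g <= (size s * d)%:R.
Proof.
elim: s => [|j s IHs] chi1_le; first by rewrite big_nil.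
rewrite big_cons mulSn natrD lerD ?chi1_le ?mem_head // IHs // => i s_i.
by rewrite chi1_le // inE s_i orbT.
Qed.

Lemma exists_irr_seq_cap_trivial n (A : {group gT}) : (#|A| <= 2 ^ n)%N ->
  exists2 s : seq (Iirr G), (size s <= n)%N & A :&: \bigcap_(i <- s) cfker 'chi_i \subset [1].
Proof.
move=> oA; have [||s [_ size_s tiAs]] := @exists_short_bigcap_sub _ _ predT
  (fun i => cfker_group 'chi[G]_i) [1] (fun i _ => sub1G _) _ n A; last by exists s.
- by move=> a /exists_irr_notin_cfker[i]; exists i.
- by rewrite setIg1 cards1 muln1.
Qed.

Lemma exists_lin_seq_cap_der1 n (A : {group gT}) :
    (#|A| <= 2 ^ n * #|A :&: (G^`(1))%g|)%N ->
  exists s : seq (Iirr G), [/\ all (fun i => 'chi_i \is a linear_char) s, (size s <= n)%N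
                              & A :&: \bigcap_(i <- s) cfker 'chi_i \subset (G^`(1))%g].
Proof.
apply: (@exists_short_bigcap_sub _ _ _ (fun i => cfker_group 'chi[G]_i)) => [i | a].
  by rewrite lin_irr_der1.
exact: exists_lin_irr_notin_cfker.
Qed.

End IrrKernels.

Section FaithfulRep.
Variables (gT : finGroupType) (G : {group gT}).
Hypothesis nilG : nilpotent G.
Local Open Scope ring_scope.

Lemma faithful_rep_center_bound n d :
    (#|'Z(G)| <= 2 ^ n)%N -> (#|G : 'Z(G)| < d.+1 ^ 2)%N ->
  exists2 m, (m <= n * d)%N & has_faithful_rep G m.
Proof.
move=> oZ iZ; have [s size_s tiZs] := exists_irr_seq_cap_trivial G oZ.
have [m def_m faithful_m] := sum_irr_faithful_rep nilG tiZs.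
exists m => //; rewrite -(ler_nat algC) def_m (le_trans (sum_irr1_le (d := d) _)) //.
  by move=> i _; apply: irr1_le_index_center.
by rewrite ler_nat leq_mul2r size_s orbT.
Qed.

Lemma faithful_rep_center_der1_bound a b d :
    (#|'Z(G)| <= 2 ^ a * #|'Z(G) :&: (G^`(1))%g|)%N -> (#|'Z(G) :&: (G^`(1))%g| <= 2 ^ b)%N ->
    (#|G : 'Z(G)| < d.+1 ^ 2)%N ->
  exists2 m, (m <= a + b * d)%N & has_faithful_rep G m.
Proof.
move=> oZ oZG' iZ; have [s1 [lin_s1 size_s1 sZs1G']] := exists_lin_seq_cap_der1 oZ.
have [s2 size_s2 tiZG's2] := exists_irr_seq_cap_trivial G oZG'.
have tiZs : 'Z(G) :&: \bigcap_(i <- s1 ++ s2) cfker 'chi_i \subset [1].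
  rewrite big_cat setIA; apply: subset_trans tiZG's2; apply: setSI.
  by rewrite subsetI subsetIl.
have [m def_m faithful_m] := sum_irr_faithful_rep nilG tiZs.
exists m => //; rewrite -(ler_nat algC) def_m big_cat natrD.
apply: lerD.
  apply: le_trans (sum_irr1_le (d := 1) _) _; last by rewrite ler_nat muln1.
  by move=> i /(allP lin_s1)/lin_char1->.
apply: le_trans (sum_irr1_le (d := d) _) _; last by rewrite ler_nat leq_mul2r size_s2 orbT.
by move=> i _; apply: irr1_le_index_center.
Qed.

Lemma faithful_rep_center_index4 a :
    #|G : 'Z(G)| = 4%N -> (#|'Z(G)| <= 2 ^ a.+1)%N ->
  exists2 m, (m <= a + 2)%N & has_faithful_rep G m.
Proof.
move=> iZ4 oZ; have oZG' : #|'Z(G) :&: (G^`(1))%g| = 2%N.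
  by rewrite (setIidPr (der1_sub_center iZ4)) card_der1_center_index4.
have [|||m le_m faithful_m] := faithful_rep_center_der1_bound (a := a) (b := 1) (d := 2).
- by rewrite oZG' -expnSr.
- by rewrite oZG'.
- by rewrite iZ4.
by exists m; rewrite // -[2%N]mul1n.
Qed.

End FaithfulRep.

Theorem lemma3p3 (gT : finGroupType) (G : {group gT}) :
  #|G| = 32 -> exists2 n : nat, n <= 5 & has_faithful_rep G n.
Proof.
move=> oG; have pG : 2.-group G by rewrite /pgroup oG.
have nilG := pgroup_nil pG; have sZG := center_sub G.
have k_le5 : logn 2 #|'Z(G)| <= 5.
  by have := dvdn_leq_log 2 (cardG_gt0 G) (cardSg sZG); rewrite oG.
have := card_pgroup (pgroupS sZG pG); move: (logn 2 _) k_le5 => k k_le5 oZ.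
have iZ : #|G : 'Z(G)| = (2 ^ (5 - k))%N.
  apply/eqP; rewrite -(eqn_pmul2l (cardG_gt0 'Z(G))) Lagrange // oZ -expnD subnKC //.
  by rewrite oG.
have center_case n d : #|'Z(G)| <= 2 ^ n -> #|G : 'Z(G)| < d.+1 ^ 2 -> n * d <= 5 ->
    exists2 m, m <= 5 & has_faithful_rep G m.
  move=> oZn iZd nd_le5; have [m le_m faithful_m] := faithful_rep_center_bound nilG oZn iZd.
  by exists m => //; apply: leq_trans nd_le5.
case: k oZ iZ k_le5 => [|[|[|[|[|[|//]]]]]] oZ iZ _.
- by apply: (center_case 0 5); rewrite ?oZ ?iZ.
- by apply: (center_case 1%N 4); rewrite ?oZ ?iZ.
- by apply: (center_case 2 2); rewrite ?oZ ?iZ.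
- have [||m le_m faithful_m] := faithful_rep_center_index4 nilG (a := 2).
  + by rewrite iZ.
  + by rewrite oZ.
  by exists m => //; apply: leq_trans le_m _.
- by apply: (center_case 4 1%N); rewrite ?oZ ?iZ.
- by apply: (center_case 5 1%N); rewrite ?oZ ?iZ.
Qed.
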